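(* Let $a\in\mathbb{R}$ and, for $\theta\in(2\pi/3,\pi)$ with $1-4a\cos^2\theta\neq0$, define \[ \zeta(\theta)=\frac{(2a-1)\cos\theta+\sqrt{(1-4a)\cos^2\theta+a}}{1-4a\cos^2\theta}. \] Then $|\zeta(\theta)|>1$ for every $a\in(-1,1/3)$ and every $\theta\in(2\pi/3,\pi)$ with $1-4a\cos^2\theta\neq0$.
   Context: For $a\in(-1,1/3)$ and $\theta\in(2\pi/3,\pi)$ the radicand $(1-4a)\cos^2\theta+a$ is positive, so $\zeta(\theta)$ is real. *)

From Stdlib Require Import Reals.
Open Scope R_scope.

Definition zeta (a theta : R) : R :=
  ((2 * a - 1) * cos theta + sqrt ((1 - 4 * a) * (cos theta)^2 + a))
  / (1 - 4 * a * (cos theta)^2).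

(* Write c = cos θ ∈ (-1, -1/2), D = 1 - 4 a c^2, k = (2a - 1) c and r = (1 - 4a) c^2 + a,
   so that zeta = (k + sqrt r) / D.  It suffices that |D| - k < sqrt r, i.e. (|D| - k)^2 < r.
   This comes from the factorisations
     r - (D - k)^2 = D (2c + 1) (a (2c + 1) - 1),
     r - (D + k)^2 = D (2c - 1) (a (2c - 1) + 1),
   whose last two factors have product > 0, resp. < 0, for a ∈ (-1, 1/3), c ∈ (-1, -1/2). *)
From Stdlib Require Import Reals Lra Psatz.
Open Scope R_scope.

Lemma cos_bounds_2PI3_PI (theta : R) :
  2 * PI / 3 < theta < PI -> -1 < cos theta < -1/2.
Proof.
  intros [Hlo Hhi].
  pose proof PI_RGT_0.
  split.
  - rewrite <- cos_PI. apply cos_decreasing_1; lra.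
  - rewrite <- cos_2PI3. apply cos_decreasing_1; lra.
Qed.

Lemma lt_sqrt_of_sqr_lt (x r : R) : x ^ 2 < r -> x < sqrt r.
Proof.
  intros Hx.
  destruct (Rlt_or_le x 0) as [Hneg | Hpos].
  - pose proof (sqrt_pos r). lra.
  - rewrite <- (sqrt_pow2 x Hpos).
    apply sqrt_lt_1_alt. split; [apply pow2_ge_0 | exact Hx].
Qed.

Lemma Rabs_div_gt_1 (x y : R) : y <> 0 -> Rabs y < Rabs x -> 1 < Rabs (x / y).
Proof.
  intros Hy Hxy.
  pose proof (Rabs_pos_lt y Hy).
  unfold Rdiv. rewrite Rabs_mult, Rabs_inv.
  apply (Rmult_lt_reg_r (Rabs y)); [assumption |].
  rewrite Rmult_1_l, Rmult_assoc, Rinv_l, Rmult_1_r by lra.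
  exact Hxy.
Qed.

Lemma sqr_abs_denom_sub_lt_radicand (a c : R) :
  -1 < a < 1/3 -> -1 < c < -1/2 ->
  1 - 4 * a * c ^ 2 <> 0 ->
  (Rabs (1 - 4 * a * c ^ 2) - (2 * a - 1) * c) ^ 2 < (1 - 4 * a) * c ^ 2 + a.
Proof.
  intros [Ha1 Ha2] [Hc1 Hc2] HD.
  set (D := 1 - 4 * a * c ^ 2) in *.
  set (k := (2 * a - 1) * c).
  assert (Hplus : 0 < (2 * c + 1) * (a * (2 * c + 1) - 1)).
  { assert (a * (2 * c + 1) - 1 < 0) by nra. nra. }
  assert (Hminus : (2 * c - 1) * (a * (2 * c - 1) + 1) < 0).
  { assert (0 < a * (2 * c - 1) + 1) by nra. nra. }
  destruct (Rdichotomy D 0 HD) as [Dneg | Dpos].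
  - rewrite Rabs_left by exact Dneg.
    assert (Gap : (1 - 4 * a) * c ^ 2 + a - (- D - k) ^ 2
                  = D * ((2 * c - 1) * (a * (2 * c - 1) + 1)))
      by (unfold D, k; ring).
    nra.
  - rewrite Rabs_right by lra.
    assert (Gap : (1 - 4 * a) * c ^ 2 + a - (D - k) ^ 2
                  = D * ((2 * c + 1) * (a * (2 * c + 1) - 1)))
      by (unfold D, k; ring).
    nra.
Qed.

Theorem lemma2p5 (a theta : R) :
  -1 < a < 1/3 ->
  2 * PI / 3 < theta < PI ->
  1 - 4 * a * (cos theta)^2 <> 0 ->
  Rabs (zeta a theta) > 1.
Proof.
  intros Ha Htheta HD.
  pose proof (cos_bounds_2PI3_PI theta Htheta) as Hc.
  pose proof (lt_sqrt_of_sqr_lt _ _ (sqr_abs_denom_sub_lt_radicand a _ Ha Hc HD))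
    as Hnum.
  apply Rlt_gt, Rabs_div_gt_1; [exact HD |].
  eapply Rlt_le_trans; [| apply Rle_abs].
  lra.
Qed.
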